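(* Up to multiplication by a positive integer, every basic weight of a basic system of type $G_2$ is one of the following (coordinates $\lambda_k=\langle\lambda,e_k\rangle$): (1) $(G_2,1,1)$: $(-1,1,0)$, $(-1,0,1)$; (2) $(G_2,1,2)$: $(-1,2,-1)$, $(-1,-1,2)$, $(-2,1,1)$; (3) $(G_2,2,1)$: $(1,0,-1)$, $(1,-1,0)$, $(0,-1,1)$; (4) $(G_2,2,2)$: $(1,-2,1)$, $(2,-1,-1)$.
   Context: $G_2$ is realized in the plane $\{x_1+x_2+x_3=0\}$ of $\mathbb R^3$ with orthonormal basis $e_1,e_2,e_3$ and standard inner product, simple roots $\alpha_1=e_1-e_2$, $\alpha_2=-2e_1+e_2+e_3$. Let $W$ be the Weyl group, $\alpha^\vee=2\alpha/\langle\alpha,\alpha\rangle$. A weight is integral if $\langle\lambda,\alpha^\vee\rangle\in\mathbb Z$ for all roots $\alpha$; $\overline\lambda$ is the dominant weight in $W\lambda$. For $I=\Delta\setminus\{\alpha_i\}$, $J=\Delta\setminus\{\alpha_j\}$, a basic weight of $(\Phi,i,j)$ is an integral $\lambda$ with $\langle\lambda,\alpha^\vee\rangle\in\mathbb Z_{>0}$ for all $\alpha\in I$ and $\{\alpha\in\Delta:\langle\overline\lambda,\alpha\rangle=0\}=J$; $(\Phi,i,j)$ is a basic system if it has a basic weight. *)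

From HB Require Import structures.
From mathcomp Require Import all_boot all_order all_algebra.
From mathcomp Require Import reals.
Set Implicit Arguments. Unset Strict Implicit. Unset Printing Implicit Defensive.
Import Order.TTheory GRing.Theory Num.Theory.
Local Open Scope ring_scope.

Section G2.
Variable R : realType.

(* vector with coordinates (a,b,c) w.r.t. the orthonormal basis e1,e2,e3 *)
Definition mkv (a b c : R) : 'rV[R]_3 := \row_(k < 3) nth 0 [:: a; b; c] k.

Definition dot (u v : 'rV[R]_3) : R := \sum_(k < 3) u 0 k * v 0 k.

Definition copair (v a : 'rV[R]_3) : R := dot v (2 / dot a a *: a).

(* the plane x1+x2+x3 = 0 (the ambient space of the G2 weights) *)
Definition in_plane (v : 'rV[R]_3) : Prop := v 0 0 + v 0 1 + v 0 2 = 0.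

Definition alpha1 : 'rV[R]_3 := mkv 1 (-1) 0.
Definition alpha2 : 'rV[R]_3 := mkv (-2) 1 1.
Definition simple_root (k : nat) : 'rV[R]_3 := if k == 1%N then alpha1 else alpha2.

Definition refl (a v : 'rV[R]_3) : 'rV[R]_3 := v - copair v a *: a.

(* Weyl group W = group generated by the simple reflections; an element of W is
   represented by a word in the simple reflections (true -> s_alpha1, false -> s_alpha2) *)
Definition weyl_act (w : seq bool) (v : 'rV[R]_3) : 'rV[R]_3 :=
  foldr (fun b x => refl (if b then alpha1 else alpha2) x) v w.

Definition in_orbit (lam mu : 'rV[R]_3) : Prop := exists w : seq bool, mu = weyl_act w lam.

Definition is_root (a : 'rV[R]_3) : Prop :=
  exists k, (k == 1%N) || (k == 2%N) /\ in_orbit (simple_root k) a.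

Definition integral (lam : 'rV[R]_3) : Prop :=
  forall a, is_root a -> copair lam a \is a Num.int.

Definition dominant (mu : 'rV[R]_3) : Prop :=
  forall k, (k == 1%N) || (k == 2%N) -> 0 <= dot mu (simple_root k).

Definition is_bar (lam mu : 'rV[R]_3) : Prop := in_orbit lam mu /\ dominant mu.

(* basic weight of (G2, i, j), with I = Delta \ {alpha_i}, J = Delta \ {alpha_j} *)
Definition basic_weight (i j : nat) (lam : 'rV[R]_3) : Prop :=
  [/\ in_plane lam, integral lam,
      (forall k, (k == 1%N) || (k == 2%N) -> k != i ->
          copair lam (simple_root k) \is a Num.int /\ 0 < copair lam (simple_root k))
    & exists mu, is_bar lam mu /\
        (forall k, (k == 1%N) || (k == 2%N) ->
           (dot mu (simple_root k) == 0) = (k != j))].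

Definition basic_list (i j : nat) : seq 'rV[R]_3 :=
  match i, j with
  | 1, 1 => [:: mkv (-1) 1 0; mkv (-1) 0 1]
  | 1, 2 => [:: mkv (-1) 2 (-1); mkv (-1) (-1) 2; mkv (-2) 1 1]
  | 2, 1 => [:: mkv 1 0 (-1); mkv 1 (-1) 0; mkv 0 (-1) 1]
  | 2, 2 => [:: mkv 1 (-2) 1; mkv 2 (-1) (-1)]
  | _, _ => [::]
  end%N.

End G2.

(* The Weyl group acts on the plane x1 + x2 + x3 = 0 by permuting coordinates
   up to a global sign: s_alpha1 swaps x1 and x2, and s_alpha2 sends
   (x1, x2, x3) to (-x1, -x3, -x2).  Hence "some coordinate vanishes"
   (x1 x2 x3 = 0) and "two coordinates coincide" ((x1 - x2)(x2 - x3)(x3 - x1) = 0)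
   are W-invariant.  The dominant weight of W lam lies on the wall of alpha_k
   for k <> j, i.e. x1 = 0 when j = 1 and x1 = x2 when j = 2, so lam has a zero,
   resp. a repeated, coordinate.  With x1 + x2 + x3 = 0 and <lam, alpha^vee> > 0
   on I only the listed rays remain, and integrality of lam, tested on alpha2
   and on the long root (1, -2, 1), makes the factor a positive integer. *)

From HB Require Import structures.
From mathcomp Require Import all_boot all_order all_algebra.
From mathcomp Require Import reals.
From mathcomp Require Import ring lra.
Set Implicit Arguments. Unset Strict Implicit. Unset Printing Implicit Defensive.
Import Order.TTheory GRing.Theory Num.Theory.
Local Open Scope ring_scope.

Section G2Weights.
Variable R : realType.
Implicit Types (a b c x y z t : R) (v : 'rV[R]_3).

Lemma mkvE a b c (k : 'I_3) : mkv a b c 0 k = nth 0 [:: a; b; c] k.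
Proof. by rewrite mxE. Qed.

Lemma row3_ind (P : 'rV[R]_3 -> Prop) : (forall x y z, P (mkv x y z)) -> forall v, P v.
Proof.
move=> Pmkv v; suff -> : v = mkv (v 0 0) (v 0 1) (v 0 2) by [].
by apply/rowP=> -[[|[|[|k]]] lt_k] //; rewrite mkvE ?ord1; congr (v _ _); apply: val_inj.
Qed.

Lemma dot_mkv a b c x y z : dot (mkv a b c) (mkv x y z) = a * x + b * y + c * z.
Proof. by rewrite /dot !big_ord_recr big_ord0 /= !mkvE add0r. Qed.

Lemma scale_mkv t a b c : t *: mkv a b c = mkv (t * a) (t * b) (t * c).
Proof. by apply/rowP=> -[[|[|[|k]]] lt_k]; rewrite !mxE. Qed.

Lemma sub_mkv a b c x y z : mkv a b c - mkv x y z = mkv (a - x) (b - y) (c - z).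
Proof. by apply/rowP=> -[[|[|[|k]]] lt_k]; rewrite !mxE //= subr0. Qed.

Lemma in_plane_mkv a b c : in_plane (mkv a b c) <-> a + b + c = 0.
Proof. by rewrite /in_plane !mkvE. Qed.

Lemma copair_alpha1 a b c : copair (mkv a b c) (alpha1 R) = a - b.
Proof. by rewrite /copair scale_mkv !dot_mkv; field. Qed.

Lemma copair_alpha2 a b c : a + b + c = 0 -> copair (mkv a b c) (alpha2 R) = - a.
Proof.
move=> abc0; have -> : a = - b - c by lra.
by rewrite /copair scale_mkv !dot_mkv; field.
Qed.

Lemma refl_alpha1 x y z : refl (alpha1 R) (mkv x y z) = mkv y x z.
Proof. by rewrite /refl copair_alpha1 scale_mkv sub_mkv; congr mkv; ring. Qed.

Lemma refl_alpha2 x y z :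
  x + y + z = 0 -> refl (alpha2 R) (mkv x y z) = mkv (- x) (- z) (- y).
Proof.
by move=> xyz0; rewrite /refl copair_alpha2 // scale_mkv sub_mkv; congr mkv; lra.
Qed.

Lemma in_plane_refl u v : in_plane u -> in_plane v -> in_plane (refl u v).
Proof.
rewrite /in_plane /refl !mxE => u0 v0.
set k := copair v u.
have -> : v 0 0 - k * u 0 0 + (v 0 1 - k * u 0 1) + (v 0 2 - k * u 0 2)
        = (v 0 0 + v 0 1 + v 0 2) - k * (u 0 0 + u 0 1 + u 0 2) by ring.
by rewrite u0 v0 mulr0 subr0.
Qed.

Lemma in_plane_weyl_act w v : in_plane v -> in_plane (weyl_act w v).
Proof.
move=> v0; elim: w => [|[] w IHw] //=; apply: in_plane_refl => //;
  by rewrite /alpha1 /alpha2; apply/in_plane_mkv; lra.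
Qed.

Lemma weyl_act_invariant (T : Type) (f : 'rV[R]_3 -> T) :
    (forall v, in_plane v -> f (refl (alpha1 R) v) = f v) ->
    (forall v, in_plane v -> f (refl (alpha2 R) v) = f v) ->
  forall w v, in_plane v -> f (weyl_act w v) = f v.
Proof.
move=> f1 f2 w v v0; elim: w => [|[] w IHw] //=;
  by rewrite (f1, f2) ?IHw //; apply: in_plane_weyl_act.
Qed.

Definition coord_prod v := v 0 0 * v 0 1 * v 0 2.

Definition coord_disc v := (v 0 0 - v 0 1) * (v 0 1 - v 0 2) * (v 0 2 - v 0 0).

Lemma coord_prod_weyl_act_eq0 w v :
  in_plane v -> (coord_prod (weyl_act w v) == 0) = (coord_prod v == 0).
Proof.
apply: (weyl_act_invariant (f := fun u => coord_prod u == 0)) => {w}{}v;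
  elim/row3_ind: v => x y z /in_plane_mkv xyz0.
  by rewrite refl_alpha1 /coord_prod !mkvE /= [y * x]mulrC.
by rewrite refl_alpha2 // /coord_prod !mkvE /= mulrNN mulrN oppr_eq0 mulrAC.
Qed.

Lemma coord_disc_weyl_act_eq0 w v :
  in_plane v -> (coord_disc (weyl_act w v) == 0) = (coord_disc v == 0).
Proof.
apply: (weyl_act_invariant (f := fun u => coord_disc u == 0)) => {w}{}v;
  elim/row3_ind: v => x y z /in_plane_mkv xyz0.
  by rewrite refl_alpha1 /coord_disc !mkvE /= -oppr_eq0; congr (_ == 0); ring.
by rewrite refl_alpha2 // /coord_disc !mkvE /=; congr (_ == 0); ring.
Qed.

Lemma orbit_wall_alpha2_prod0 w v :
  in_plane v -> dot (weyl_act w v) (alpha2 R) = 0 -> coord_prod v = 0.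
Proof.
move=> v0 wall; apply/eqP; rewrite -(coord_prod_weyl_act_eq0 w v0).
move: (weyl_act w v) (in_plane_weyl_act w v0) wall; elim/row3_ind => x y z.
move=> /in_plane_mkv xyz0; rewrite /alpha2 dot_mkv => wall.
have -> : x = 0 by lra.
by rewrite /coord_prod !mkvE /= !mul0r.
Qed.

Lemma orbit_wall_alpha1_disc0 w v :
  in_plane v -> dot (weyl_act w v) (alpha1 R) = 0 -> coord_disc v = 0.
Proof.
move=> v0 wall; apply/eqP; rewrite -(coord_disc_weyl_act_eq0 w v0).
move: (weyl_act w v) wall; elim/row3_ind => x y z.
rewrite /alpha1 dot_mkv => wall.
have -> : x = y by lra.
by rewrite /coord_disc !mkvE /= subrr !mul0r.
Qed.

Lemma is_root_alpha2 : is_root (alpha2 R).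
Proof. by exists 2%N; split => //; exists [::]. Qed.

Lemma is_root_long : is_root (mkv 1 (-2) 1 : 'rV[R]_3).
Proof. by exists 2%N; split => //; exists [:: true]; rewrite /= refl_alpha1. Qed.

Lemma integral_coords a b c :
  a + b + c = 0 -> integral (mkv a b c) -> a \is a Num.int /\ b \is a Num.int.
Proof.
move=> abc0 int_abc; split; rewrite -rpredN.
  by rewrite -(copair_alpha2 abc0); apply: int_abc; apply: is_root_alpha2.
have <- : copair (mkv a b c) (mkv 1 (-2) 1) = - b.
  have -> : a = - b - c by lra.
  by rewrite /copair scale_mkv !dot_mkv; field.
exact: int_abc is_root_long.
Qed.

Definition nat_multiple_in (s : seq 'rV[R]_3) v :=
  exists (n : nat) (mu : 'rV[R]_3), (0 < n)%N /\ mu \in s /\ v = n%:R *: mu.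

Lemma int_multiple_in s m t v :
  m \in s -> t \is a Num.int -> 0 < t -> v = t *: m -> nat_multiple_in s v.
Proof.
move=> sm t_int t_gt0 ->; have /natrP[n tn] : t \is a Num.nat by rewrite natrEint t_int ltW.
by exists n, m; rewrite -tn -(ltr0n R) -tn.
Qed.

Local Tactic Notation "int_multiple" uconstr(vec) uconstr(scalar) :=
  refine (@int_multiple_in _ vec scalar _ _ _ _ _);
    [ by rewrite !inE eqxx ?orbT | by rewrite ?rpredN | lra
    | rewrite scale_mkv; congr mkv; lra ].

Lemma nat_multiple_basic_list11 a b c :
  a + b + c = 0 -> a \is a Num.int -> a < 0 ->
  coord_prod (mkv a b c) = 0 -> nat_multiple_in (basic_list R 1 1) (mkv a b c).
Proof.
rewrite /coord_prod !mkvE /= => abc0 a_int a_lt0 /eqP.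
rewrite !mulf_eq0 -orbA => /or3P[/eqP a0 | /eqP b0 | /eqP c0]; first lra.
  int_multiple (mkv (-1) 0 1) (- a).
int_multiple (mkv (-1) 1 0) (- a).
Qed.

Lemma nat_multiple_basic_list12 a b c :
  a + b + c = 0 -> a \is a Num.int -> b \is a Num.int -> a < 0 ->
  coord_disc (mkv a b c) = 0 -> nat_multiple_in (basic_list R 1 2) (mkv a b c).
Proof.
rewrite /coord_disc !mkvE /= => abc0 a_int b_int a_lt0 /eqP.
rewrite !mulf_eq0 !subr_eq0 -orbA => /or3P[/eqP ab | /eqP bc | /eqP ca].
- int_multiple (mkv (-1) (-1) 2) (- b).
- int_multiple (mkv (-2) 1 1) b.
- int_multiple (mkv (-1) 2 (-1)) (- a).
Qed.

Lemma nat_multiple_basic_list21 a b c :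
  a + b + c = 0 -> a \is a Num.int -> b \is a Num.int -> b < a ->
  coord_prod (mkv a b c) = 0 -> nat_multiple_in (basic_list R 2 1) (mkv a b c).
Proof.
rewrite /coord_prod !mkvE /= => abc0 a_int b_int b_lt_a /eqP.
rewrite !mulf_eq0 -orbA => /or3P[/eqP a0 | /eqP b0 | /eqP c0].
- int_multiple (mkv 0 (-1) 1) (- b).
- int_multiple (mkv 1 0 (-1)) a.
- int_multiple (mkv 1 (-1) 0) a.
Qed.

Lemma nat_multiple_basic_list22 a b c :
  a + b + c = 0 -> a \is a Num.int -> b \is a Num.int -> b < a ->
  coord_disc (mkv a b c) = 0 -> nat_multiple_in (basic_list R 2 2) (mkv a b c).
Proof.
rewrite /coord_disc !mkvE /= => abc0 a_int b_int b_lt_a /eqP.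
rewrite !mulf_eq0 !subr_eq0 -orbA => /or3P[/eqP ab | /eqP bc | /eqP ca]; first lra.
  int_multiple (mkv 2 (-1) (-1)) (- b).
int_multiple (mkv 1 (-2) 1) a.
Qed.

End G2Weights.

Theorem theorem5p13 (R : realType) (i j : nat) (lam : 'rV[R]_3) :
  (i == 1%N) || (i == 2%N) -> (j == 1%N) || (j == 2%N) ->
  basic_weight i j lam ->
  exists (n : nat) (mu : 'rV[R]_3),
    (0 < n)%N /\ mu \in basic_list R i j /\ lam = n%:R *: mu.
Proof.
elim/row3_ind: lam => a b c hi hj.
move=> [/in_plane_mkv abc0 lam_int lam_pos [_ [[[w ->] _] mu_walls]]].
have [a_int b_int] := integral_coords abc0 lam_int.
have lam0 : in_plane (mkv a b c) by apply/in_plane_mkv.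
have prod0 : j = 1%N -> coord_prod (mkv a b c) = 0.
  move=> j1; apply: (orbit_wall_alpha2_prod0 (w := w) lam0).
  by apply/eqP; rewrite [_ == _](mu_walls 2%N) ?j1.
have disc0 : j = 2%N -> coord_disc (mkv a b c) = 0.
  move=> j2; apply: (orbit_wall_alpha1_disc0 (w := w) lam0).
  by apply/eqP; rewrite [_ == _](mu_walls 1%N) ?j2.
case/orP: hi => /eqP i_eq; subst i.
- have [_] := lam_pos 2%N isT isT; rewrite /= copair_alpha2 // oppr_gt0 => a_lt0.
  by case/orP: hj => /eqP j_eq; rewrite j_eq;
    [exact: nat_multiple_basic_list11 abc0 a_int a_lt0 (prod0 j_eq)
    |exact: nat_multiple_basic_list12 abc0 a_int b_int a_lt0 (disc0 j_eq)].
- have [_] := lam_pos 1%N isT isT; rewrite /= copair_alpha1 subr_gt0 => b_lt_a.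
  by case/orP: hj => /eqP j_eq; rewrite j_eq;
    [exact: nat_multiple_basic_list21 abc0 a_int b_int b_lt_a (prod0 j_eq)
    |exact: nat_multiple_basic_list22 abc0 a_int b_int b_lt_a (disc0 j_eq)].
Qed.
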